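(* Let $K$ be a field, let $L\in K^{n\times n}[s]$, $L_1\in K^{n_1\times n_1}[s]$ be nonsingular polynomial matrices, and let $\Theta,\Theta_1\in K^{n_1\times n}_\infty(s)$ satisfy $\Theta L=L_1\Theta_1$. Let $\phi:U^L\to U^{L_1}$ be defined by $\phi\bar x=\rho_e^{L_1}(\Theta\bar x)$, $\bar x\in U^L$. Then the dual map $\phi^*:U^{L_1^T}\to U^{L^T}$ of $\phi$ with respect to the pairings $\langle\cdot,\cdot\rangle_L$ and $\langle\cdot,\cdot\rangle_{L_1}$ is given by $$\phi^*\,\rho^{L_1^T}w=\rho^{L^T}(\Theta_1^Tw)\qquad\text{for all } w\in K^{n_1}_\infty(s).$$
   Context: $K(s)$ denotes the field of rational functions over $K$. A rational function $f$ is proper if $f=0$ or $f=p/q$ with $p,q\in K[s]$, $q\ne0$, $\deg p\le\deg q$; $K_\infty(s)$ is the ring of proper rational functions, and $K^n_\infty(s)$, $K^{m\times r}_\infty(s)$ denote vectors/matrices with proper rational entries. One has $K(s)=K[s]\oplus s^{-1}K_\infty(s)$; $\pi_+:K(s)\to K[s]$ denotes the projection onto the polynomial part along $s^{-1}K_\infty(s)$, extended entrywise to vectors and matrices, and $(f)_0=(\pi_+f)(0)$ (also entrywise). For a nonsingular $M\in K^{m\times m}[s]$, define $\rho^M:K^m_\infty(s)\to K^m[s]$ by $\rho^M x=M\,\pi_+(M^{-1}x)$, write $\bar x=\rho^Mx$, and let $U^M=\operatorname{Im}\rho^M$, a $K_\infty(s)$-module (and $K$-vector space) via $q\cdot\rho^Mx=\rho^M(qx)$.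 The extension $\rho_e^{L_1}$ is $\rho_e^{L_1}w=L_1\pi_+(L_1^{-1}w)$ for $w\in K^{n_1}(s)$. The bilinear form $\langle \rho^{M^T}y,\rho^Mx\rangle_M=(y^TM^{-1}x)_0$, $x,y\in K^m_\infty(s)$, is a well-defined nondegenerate $K$-bilinear pairing $U^{M^T}\times U^M\to K$. The dual map $\phi^*$ of a $K$-linear $\phi:U^L\to U^{L_1}$ is the $K$-linear map $U^{L_1^T}\to U^{L^T}$ with $\langle\phi^*\eta,\xi\rangle_L=\langle\eta,\phi\xi\rangle_{L_1}$ for all $\eta\in U^{L_1^T}$, $\xi\in U^L$. *)

From HB Require Import structures.
From mathcomp Require Import all_boot all_order all_algebra.
From mathcomp Require Import generic_quotient fraction.
From Stdlib Require Import ClassicalEpsilon.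
Set Implicit Arguments. Unset Strict Implicit. Unset Printing Implicit Defensive.
Import GRing.Theory.
Local Open Scope ring_scope.

Section Defs.
Variable K : fieldType.

Definition RF := {fraction {poly K}}.

Definition toF (p : {poly K}) : RF := @FracField.tofrac {poly K} p.

Definition numF (f : RF) : {poly K} := (val (repr f)).1.
Definition denF (f : RF) : {poly K} := (val (repr f)).2.

(* pi_+ : polynomial part of p/q is the quotient p %/ q *)
Definition pip (f : RF) : {poly K} := numF f %/ denF f.

Definition const0 (f : RF) : K := (pip f).[0].

(* f proper: f = 0 or deg p <= deg q (size = deg + 1; size 0 = 0) *)
Definition is_proper (f : RF) : bool := (size (numF f) <= size (denF f))%N.

Definition proper_vec m (x : 'cV[RF]_m) : Prop := forall i, is_proper (x i 0).
Definition proper_mx m r (A : 'M[RF]_(m, r)) : Prop :=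
  forall i j, is_proper (A i j).

Definition polyF m r (M : 'M[{poly K}]_(m, r)) : 'M[RF]_(m, r) := map_mx toF M.

(* rho_e^M w = M pi_+(M^{-1} w), for any w in K^m(s); rho^M is its
   restriction to proper vectors *)
Definition rho_e m (M : 'M[{poly K}]_m) (w : 'cV[RF]_m) : 'cV[{poly K}]_m :=
  M *m map_mx pip (invmx (polyF M) *m w).
Definition rho m (M : 'M[{poly K}]_m) (x : 'cV[RF]_m) : 'cV[{poly K}]_m :=
  rho_e M x.

Definition inU m (M : 'M[{poly K}]_m) (a : 'cV[{poly K}]_m) : Prop :=
  exists x, proper_vec x /\ rho M x = a.

(* <rho^{M^T} y, rho^M x>_M = (y^T M^{-1} x)_0, computed via chosen
   representatives (well-defined by the context) *)
Definition pairing m (M : 'M[{poly K}]_m) (a b : 'cV[{poly K}]_m) : K :=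
  let yx := epsilon (inhabits (0 : 'cV[RF]_m, 0 : 'cV[RF]_m))
     (fun yx : 'cV[RF]_m * 'cV[RF]_m =>
        [/\ proper_vec yx.1, proper_vec yx.2,
            rho M^T yx.1 = a & rho M yx.2 = b]) in
  const0 ((yx.1^T *m invmx (polyF M) *m yx.2) 0 0).

Definition is_dual n n1 (L : 'M[{poly K}]_n) (L1 : 'M[{poly K}]_n1)
  (phi : 'cV[{poly K}]_n -> 'cV[{poly K}]_n1)
  (psi : 'cV[{poly K}]_n1 -> 'cV[{poly K}]_n) : Prop :=
  forall eta, inU L1^T eta ->
    inU L^T (psi eta) /\
    forall xi, inU L xi -> pairing L (psi eta) xi = pairing L1 eta (phi xi).

Definition phi_map n n1 (L1 : 'M[{poly K}]_n1) (Theta : 'M[RF]_(n1, n))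
  (xbar : 'cV[{poly K}]_n) : 'cV[{poly K}]_n1 :=
  rho_e L1 (Theta *m polyF xbar).

End Defs.

From HB Require Import structures.
From mathcomp Require Import all_boot all_order all_algebra.
From mathcomp Require Import generic_quotient fraction zify.
Local Open Scope quotient_scope.
From Stdlib Require Import ClassicalEpsilon.
Import GRing.Theory.
Local Open Scope ring_scope.

(* Write x = rho^L x + L s with pi_+ s = 0.  Since Theta L = L1 Theta1 and the
   proper matrix Theta1 keeps s strictly proper, rho_e^{L1} annihilates
   Theta L s, so phi (rho^L x) = rho^{L1} (Theta x).  Hence
     <rho^{L1^T} w, phi (rho^L x)> = (w^T L1^-1 Theta x)_0
                                   = (w^T Theta1 L^-1 x)_0
                                   = <rho^{L^T} (Theta1^T w), rho^L x>,
   which gives a dual map; it is the only one because the pairing is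
   nondegenerate: testing against x = s^-k e_i reads off the k-th coefficient
   of the i-th entry of pi_+ (L^-T y). *)

Section RationalFunctions.
Context {K : fieldType}.
Local Notation F := (@toF K).

Lemma denF_neq0 (f : RF K) : denF f != 0.
Proof. exact: denom_ratioP. Qed.

Lemma toF_inj : injective F.
Proof. by move=> p q /eqP; rewrite /toF tofrac_eq => /eqP. Qed.

Lemma toF_eq0 (p : {poly K}) : (F p == 0) = (p == 0).
Proof. exact: tofrac_eq0. Qed.

Lemma toF0 : F 0 = 0. Proof. exact: tofrac0. Qed.
Lemma toF1 : F 1 = 1. Proof. exact: tofrac1. Qed.
Lemma toFD : {morph F : p q / p + q}. Proof. exact: tofracD. Qed.
Lemma toFM : {morph F : p q / p * q}. Proof. exact: tofracM. Qed.

Lemma toF_numF (f : RF K) : F (numF f) = f * F (denF f).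
Proof.
rewrite /toF /numF /denF; set r := repr f.
have -> : f = \pi_(RF K) r by rewrite /r reprK.
unlock FracField.tofrac.
transitivity (\pi_(RF K) (FracField.mulf r (Ratio (val r).2 1))); last first.
  exact: FracField.pi_mul.
apply/eqmodP; rewrite /= FracField.equivfE /FracField.mulf.
rewrite !numden_Ratio ?(oner_neq0, mulf_neq0, denom_ratioP) //.
by rewrite !mulr1 mul1r mulrC.
Qed.

Lemma frac_numden (f : RF K) : f = F (numF f) / F (denF f).
Proof. by rewrite toF_numF mulfK // toF_eq0 denF_neq0. Qed.

Lemma numF_cross {a b : {poly K}} {f : RF K} : b != 0 -> f = F a / F b ->
  numF f * b = a * denF f.
Proof.
move=> b0 fE; apply: toF_inj.
by rewrite !toFM toF_numF fE mulrAC mulfVK // toF_eq0.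
Qed.

Lemma pip_frac (a b : {poly K}) : b != 0 -> pip (F a / F b) = a %/ b.
Proof.
move=> b0; set f := F a / F b; rewrite /pip.
have cross := numF_cross b0 (erefl f).
rewrite -(@divp_pmul2r _ b (denF f) (numF f) b0 (denF_neq0 f)) cross.
by rewrite mulrC divp_pmul2l ?denF_neq0.
Qed.

Lemma pip_frac_eq0 (a b : {poly K}) : b != 0 ->
  (pip (F a / F b) == 0) = (size a < size b)%N.
Proof.
move=> b0; rewrite pip_frac // divp_eq0 (negbTE b0) /=.
by case: eqP => // ->; rewrite size_poly0 size_poly_gt0.
Qed.

Lemma proper_frac (a b : {poly K}) : b != 0 ->
  is_proper (F a / F b) = (size a <= size b)%N.
Proof.
move=> b0; set f := F a / F b; rewrite /is_proper.
have d0 := denF_neq0 f.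
have cross := numF_cross b0 (erefl f).
have [a0|a0] := eqVneq a 0.
  move: cross; rewrite a0 mul0r => /eqP; rewrite mulf_eq0 (negbTE b0) orbF.
  by move=> /eqP ->; rewrite !size_poly0.
have n0 : numF f != 0.
  apply: contra_neq a0 => n0; move: cross; rewrite n0 mul0r => /esym/eqP.
  by rewrite mulf_eq0 (negbTE d0) orbF => /eqP.
have := congr1 (fun p : {poly K} => size p) cross; rewrite /= !size_mul //.
have pb : (0 < size b)%N by rewrite size_poly_gt0.
have pa : (0 < size a)%N by rewrite size_poly_gt0.
have pn : (0 < size (numF f))%N by rewrite size_poly_gt0.
have pd : (0 < size (denF f))%N by rewrite size_poly_gt0.
move: (size (numF f)) (size (denF f)) (size a) (size b) pn pd pa pb => N D A B.
by rewrite -!subn1 => *; apply/idP/idP; lia.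
Qed.

Lemma pip_toF (p : {poly K}) : pip (F p) = p.
Proof. by rewrite -[F p]divr1 -toF1 pip_frac ?oner_neq0 // divp1. Qed.

Lemma frac_add (f g : RF K) :
  f + g = F (numF f * denF g + numF g * denF f) / F (denF f * denF g).
Proof.
rewrite [in LHS](frac_numden f) [in LHS](frac_numden g).
by rewrite addf_div ?toF_eq0 ?denF_neq0 // toFD !toFM.
Qed.

Lemma frac_mul (f g : RF K) :
  f * g = F (numF f * numF g) / F (denF f * denF g).
Proof.
by rewrite [in LHS](frac_numden f) [in LHS](frac_numden g) mulf_div !toFM.
Qed.

Lemma pip0 : pip (0 : RF K) = 0.
Proof. by rewrite -toF0 pip_toF. Qed.

Lemma pipD : {morph @pip K : f g / f + g}.
Proof.
move=> f g; have df := denF_neq0 f; have dg := denF_neq0 g.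
rewrite frac_add pip_frac ?mulf_neq0 // divpD divp_pmul2r //.
by rewrite [numF g * _]mulrC divp_pmul2l.
Qed.

HB.instance Definition _ :=
  GRing.isNmodMorphism.Build (RF K) {poly K} (@pip K) (pip0, pipD).

Lemma leq_size_mul (a b c d : {poly K}) : b != 0 -> d != 0 ->
  (size a <= size b)%N -> (size c <= size d)%N ->
  (size (a * c)%R <= size (b * d)%R)%N.
Proof.
move=> b0 d0 ab cd; apply: leq_trans (size_polyMleq a c) _.
by rewrite size_mul // -!subn1 leq_sub2r // leq_add.
Qed.

Lemma ltn_size_mul (a b c d : {poly K}) : b != 0 -> d != 0 ->
  (size a <= size b)%N -> (size c < size d)%N ->
  (size (a * c)%R < size (b * d)%R)%N.
Proof.
move=> b0 d0 ab cd; apply: leq_ltn_trans (size_polyMleq a c) _.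
have pb : (0 < size b)%N by rewrite size_poly_gt0.
rewrite size_mul // -!subn1.
by move: (size a) (size b) (size c) (size d) ab cd pb => *; lia.
Qed.

Lemma proper0 : is_proper (0 : RF K).
Proof.
by rewrite -toF0 -[F 0]divr1 -toF1 proper_frac ?oner_neq0 ?size_poly0.
Qed.

Lemma properD (f g : RF K) : is_proper f -> is_proper g -> is_proper (f + g).
Proof.
have df := denF_neq0 f; have dg := denF_neq0 g.
move=> pf pg; rewrite frac_add proper_frac ?mulf_neq0 //.
apply: leq_trans (size_polyD _ _) _; rewrite geq_max leq_size_mul //=.
by rewrite mulrC leq_size_mul.
Qed.

Lemma properM (f g : RF K) : is_proper f -> is_proper g -> is_proper (f * g).
Proof.
have df := denF_neq0 f; have dg := denF_neq0 g.
by move=> pf pg; rewrite frac_mul proper_frac ?mulf_neq0 // leq_size_mul.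
Qed.

Lemma pip_proper_mul (f g : RF K) : is_proper f -> pip g = 0 -> pip (f * g) = 0.
Proof.
have df := denF_neq0 f; have dg := denF_neq0 g.
move=> pf /eqP; rewrite {1}[g]frac_numden pip_frac_eq0 // => pg; apply/eqP.
by rewrite frac_mul pip_frac_eq0 ?mulf_neq0 //; apply: ltn_size_mul.
Qed.

Lemma proper_invXn k : is_proper (F 'X^k)^-1.
Proof.
have X0 : ('X^k : {poly K}) != 0 by rewrite monic_neq0 ?monicXn.
by rewrite -[_^-1]mul1r -toF1 proper_frac // size_poly1 size_polyXn.
Qed.

Lemma const0B : {morph @const0 K : f g / f - g}.
Proof. by move=> f g; rewrite /const0 raddfB hornerD hornerN. Qed.

Lemma const0_divXn (f : RF K) k : const0 (f / F 'X^k) = (pip f)`_k.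
Proof.
have X0 : ('X^k : {poly K}) != 0 by rewrite monic_neq0 ?monicXn.
rewrite [f in LHS]frac_numden -mulrA -invfM -toFM /const0.
rewrite pip_frac ?mulf_neq0 ?denF_neq0 // -divp_divl.
rewrite -Pdiv.IdomainMonic.drop_poly_divp ?monicXn //.
by rewrite horner_coef0 coef_drop_poly.
Qed.

Local Notation pipmx := (map_mx (@pip K)).

Lemma polyF_unitmx {m} {M : 'M[{poly K}]_m} : \det M != 0 -> polyF M \in unitmx.
Proof. by rewrite unitmxE unitfE /polyF /toF det_map_mx tofrac_eq0. Qed.

Lemma polyF_mul m r p (A : 'M[{poly K}]_(m, r)) (B : 'M_(r, p)) :
  polyF (A *m B) = polyF A *m polyF B.
Proof. exact: map_mxM. Qed.

Lemma invmx_polyF_tr m (M : 'M[{poly K}]_m) :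
  invmx (polyF M^T) = (invmx (polyF M))^T.
Proof. by rewrite /polyF -map_trmx trmx_inv. Qed.

Lemma polyF_inj m r : injective (@polyF K m r).
Proof.
move=> A B AB; apply/matrixP=> i j; apply: toF_inj.
by have := congr1 (fun C : 'M_(m, r) => C i j) AB; rewrite !mxE.
Qed.

Lemma mulmx_eq0_det {m r} {M : 'M[{poly K}]_m} (X : 'M_(m, r)) :
  \det M != 0 -> (M *m X == 0) = (X == 0).
Proof.
move=> dM; apply/eqP/eqP=> [MX0|->]; last exact: mulmx0.
apply: polyF_inj; rewrite -[polyF X](mulKmx (polyF_unitmx dM)) -polyF_mul MX0.
have polyF0 : polyF (0 : 'M[{poly K}]_(m, r)) = 0.
  by apply/matrixP=> i j; rewrite !mxE toF0.
by rewrite polyF0 mulmx0.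
Qed.

Lemma proper_vecP {m} {x : 'cV[RF K]_m} : proper_vec x <-> proper_mx x.
Proof. by split=> px i => [j|]; rewrite ?(ord1 j). Qed.

Lemma proper_trmx {m r} {A : 'M[RF K]_(m, r)} : proper_mx A -> proper_mx A^T.
Proof. by move=> pA i j; rewrite mxE. Qed.

Lemma proper_mulmx {m r p} {A : 'M[RF K]_(m, r)} {B : 'M_(r, p)} :
  proper_mx A -> proper_mx B -> proper_mx (A *m B).
Proof.
move=> pA pB i j; rewrite mxE.
apply: (big_ind (@is_proper K)) => [|f g|k _]; first exact: proper0.
  exact: properD.
exact: properM.
Qed.

Lemma proper_mulmx_vec {m r} {A : 'M[RF K]_(m, r)} {x : 'cV_r} :
  proper_mx A -> proper_vec x -> proper_vec (A *m x).
Proof. by move=> pA /proper_vecP px; apply/proper_vecP/proper_mulmx. Qed.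

Lemma pipmx_mulmx_eq0 {m r p} {A : 'M[RF K]_(m, r)} {S : 'M_(r, p)} :
  proper_mx A -> pipmx S = 0 -> pipmx (A *m S) = 0.
Proof.
move=> pA S0; apply/matrixP=> i j; rewrite !mxE raddf_sum.
apply: big1 => k _; apply: pip_proper_mul; first exact: pA.
by have := congr1 (fun C : 'M_(r, p) => C k j) S0; rewrite !mxE.
Qed.

Lemma rho_eB m (M : 'M[{poly K}]_m) : {morph rho_e M : x y / x - y}.
Proof. by move=> x y; rewrite /rho_e mulmxBr map_mxB mulmxBr. Qed.

Lemma rho_e_eqP {m} {M : 'M[{poly K}]_m} {w w' : 'cV_m} : \det M != 0 ->
  reflect (rho_e M w' = rho_e M w)
          (pipmx (invmx (polyF M) *m (w' - w)) == 0).
Proof.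
move=> dM; rewrite -(mulmx_eq0_det _ dM) -[M *m _]/(rho_e M (w' - w)).
by rewrite rho_eB subr_eq0; apply: eqP.
Qed.

Lemma rho_e_addM {m} (M : 'M[{poly K}]_m) (w : 'cV_m) (s : 'cV_m) :
  \det M != 0 -> pipmx s = 0 -> rho_e M (w + polyF M *m s) = rho_e M w.
Proof.
move=> dM s0; apply/rho_e_eqP; rewrite // addrC addKr.
by rewrite mulKmx ?polyF_unitmx ?s0.
Qed.

Lemma rho_e_decomp {m} (M : 'M[{poly K}]_m) (w : 'cV_m) : \det M != 0 ->
  exists2 s, pipmx s = 0 & w = polyF (rho_e M w) + polyF M *m s.
Proof.
move=> dM; set v := invmx (polyF M) *m w.
exists (v - polyF (pipmx v)).
  by apply/matrixP=> i j; rewrite !mxE raddfB /= pip_toF subrr.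
by rewrite /rho_e polyF_mul mulmxBr -/v addrC subrK mulKVmx ?polyF_unitmx.
Qed.

Lemma form_trmx m (N : 'M[RF K]_m) (y x : 'cV_m) :
  (y^T *m N *m x) 0 0 = (x^T *m N^T *m y) 0 0.
Proof.
transitivity (((y^T *m N *m x)^T) 0 0); first by rewrite [RHS]mxE.
by rewrite !trmx_mul trmxK mulmxA.
Qed.

Lemma form_subl m (N : 'M[RF K]_m) (y y' x : 'cV_m) :
  (y^T *m N *m x) 0 0 - (y'^T *m N *m x) 0 0 = ((y - y')^T *m N *m x) 0 0.
Proof. by rewrite linearB /= !mulmxBl !mxE. Qed.

Lemma form_delta m (N : 'M[RF K]_m) (y : 'cV_m) i c :
  (y^T *m N *m (c *: delta_mx i 0 : 'cV_m)) 0 0 = (N^T *m y) i 0 * c.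
Proof.
by rewrite form_trmx linearZ /= trmx_delta -mulmxA -scalemxAl -rowE !mxE mulrC.
Qed.

Lemma const0_form_eq {m} {N : 'M[RF K]_m} {y x x' : 'cV_m} :
  proper_vec y -> pipmx (N *m (x' - x)) = 0 ->
  const0 ((y^T *m N *m x') 0 0) = const0 ((y^T *m N *m x) 0 0).
Proof.
move=> /proper_vecP py Nx0; apply/eqP; rewrite -subr_eq0 -const0B.
have -> : (y^T *m N *m x') 0 0 - (y^T *m N *m x) 0 0 =
          (y^T *m (N *m (x' - x))) 0 0.
  by rewrite !mulmxBr !mulmxA !mxE.
have := pipmx_mulmx_eq0 (proper_trmx py) Nx0.
move/(congr1 (fun C : 'M_(1, 1) => C 0 0)); rewrite !mxE /const0 => ->.
by rewrite horner0.
Qed.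

Lemma form_rho_eq m (M : 'M[{poly K}]_m) (y y' x x' : 'cV_m) : \det M != 0 ->
  proper_vec y' -> proper_vec x ->
  rho M^T y' = rho M^T y -> rho M x' = rho M x ->
  const0 ((y'^T *m invmx (polyF M) *m x') 0 0) =
  const0 ((y^T *m invmx (polyF M) *m x) 0 0).
Proof.
move=> dM py' px; have dMT : \det M^T != 0 by rewrite det_tr.
move=> /(rho_e_eqP dMT)/eqP; rewrite invmx_polyF_tr => ey.
move=> /(rho_e_eqP dM)/eqP ex.
by rewrite (const0_form_eq py' ex) form_trmx (const0_form_eq px ey) -form_trmx.
Qed.

(* [pairing] evaluates the form at an arbitrary choice of representatives;
   by [form_rho_eq] the choice does not matter. *)
Lemma pairing_rho {m} {M : 'M[{poly K}]_m} {y x : 'cV_m} : \det M != 0 ->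
  proper_vec y -> proper_vec x ->
  pairing M (rho M^T y) (rho M x) = const0 ((y^T *m invmx (polyF M) *m x) 0 0).
Proof.
move=> dM py px; rewrite /pairing.
set P := (fun yx : 'cV[RF K]_m * 'cV[RF K]_m => _).
have /(epsilon_spec (inhabits (0, 0))) : exists yx, P yx by exists (y, x).
by case: (epsilon _ P) => y' x' [/= py' px' ey ex]; apply: form_rho_eq.
Qed.

Lemma rho_tr_eq_of_form {m} {M : 'M[{poly K}]_m} {y y' : 'cV_m} : \det M != 0 ->
  (forall x, proper_vec x ->
     const0 ((y^T *m invmx (polyF M) *m x) 0 0) =
     const0 ((y'^T *m invmx (polyF M) *m x) 0 0)) ->
  rho M^T y = rho M^T y'.
Proof.
move=> dM eq_form; have dMT : \det M^T != 0 by rewrite det_tr.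
apply/(rho_e_eqP dMT); rewrite invmx_polyF_tr.
apply/eqP/matrixP=> i j; rewrite (ord1 j) [LHS]mxE [RHS]mxE.
apply/polyP=> k; rewrite coef0.
(* The test vector s^-k e_i picks the k-th coefficient of the i-th entry. *)
have px : proper_vec ((F 'X^k)^-1 *: delta_mx i 0).
  move=> i'; rewrite !mxE; case: eqP => _ /=.
    by rewrite mulr1; apply: proper_invXn.
  by rewrite mulr0; apply: proper0.
move: (eq_form _ px) => /eqP; rewrite -subr_eq0 -const0B form_subl.
by rewrite form_delta const0_divXn => /eqP.
Qed.

Section DualMap.
Context {n n1 : nat} {L : 'M[{poly K}]_n} {L1 : 'M[{poly K}]_n1}.
Context {Theta Theta1 : 'M[RF K]_(n1, n)}.
Hypotheses (dL : \det L != 0) (dL1 : \det L1 != 0).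
Hypotheses (pTheta : proper_mx Theta) (pTheta1 : proper_mx Theta1).
Hypothesis intertwine : Theta *m polyF L = polyF L1 *m Theta1.

Lemma phi_map_rho x : phi_map L1 Theta (rho L x) = rho L1 (Theta *m x).
Proof.
have [s s0 {2}->] := rho_e_decomp L x dL.
rewrite /phi_map /rho mulmxDr mulmxA intertwine -mulmxA.
by rewrite rho_e_addM // pipmx_mulmx_eq0.
Qed.

Lemma pairing_phi_map w x : proper_vec w -> proper_vec x ->
  pairing L1 (rho L1^T w) (phi_map L1 Theta (rho L x)) =
  pairing L (rho L^T (Theta1^T *m w)) (rho L x).
Proof.
move=> pw px; have pThx := proper_mulmx_vec pTheta px.
have pThw := proper_mulmx_vec (proper_trmx pTheta1) pw.
rewrite phi_map_rho (pairing_rho dL1 pw pThx) (pairing_rho dL pThw px).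
rewrite trmx_mul trmxK.
have intertwine_inv : invmx (polyF L1) *m Theta = Theta1 *m invmx (polyF L).
  rewrite -[LHS]mulmx1 -(mulmxV (polyF_unitmx dL)) mulmxA -(mulmxA _ Theta).
  by rewrite intertwine mulKmx ?polyF_unitmx.
by rewrite -!mulmxA (mulmxA _ Theta) intertwine_inv !mulmxA.
Qed.

Lemma dual_phi_map_exists : exists psi, is_dual L L1 (phi_map L1 Theta) psi.
Proof.
pose P eta (w : 'cV[RF K]_n1) := proper_vec w /\ rho L1^T w = eta.
pose lift eta := epsilon (inhabits 0) (P eta).
exists (fun eta => rho L^T (Theta1^T *m lift eta)) => _ [w [pw <-]].
have [plift elift] : P (rho L1^T w) (lift (rho L1^T w)).
  by apply: epsilon_spec; exists w.
split; first by exists (Theta1^T *m lift (rho L1^T w)); split => //;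
  apply: proper_mulmx_vec => //; apply: proper_trmx.
by move=> _ [x [px <-]]; rewrite -{2}elift pairing_phi_map.
Qed.

Lemma dual_phi_mapE psi : is_dual L L1 (phi_map L1 Theta) psi ->
  forall w, proper_vec w -> psi (rho L1^T w) = rho L^T (Theta1^T *m w).
Proof.
move=> psi_dual w pw; have pThw := proper_mulmx_vec (proper_trmx pTheta1) pw.
have [[y [py ey]] psi_adj] := psi_dual _ (ex_intro _ w (conj pw erefl)).
rewrite -ey; apply: (rho_tr_eq_of_form dL) => x px.
rewrite -(pairing_rho dL py px) -(pairing_rho dL pThw px) ey psi_adj.
  exact: pairing_phi_map.
by exists x.
Qed.

End DualMap.

End RationalFunctions.

Theorem theorem3p4 (K : fieldType) (n n1 : nat)
  (L : 'M[{poly K}]_n) (L1 : 'M[{poly K}]_n1)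
  (Theta Theta1 : 'M[RF K]_(n1, n)) :
  \det L != 0 -> \det L1 != 0 ->
  proper_mx Theta -> proper_mx Theta1 ->
  Theta *m polyF L = polyF L1 *m Theta1 ->
  (exists psi, is_dual L L1 (phi_map L1 Theta) psi) /\
  (forall psi, is_dual L L1 (phi_map L1 Theta) psi ->
     forall w : 'cV[RF K]_n1, proper_vec w ->
       psi (rho L1^T w) = rho L^T (Theta1^T *m w)).
Proof.
move=> dL dL1 pTheta pTheta1 intertwine; split.
  exact: (dual_phi_map_exists dL dL1 pTheta pTheta1 intertwine).
exact: (dual_phi_mapE dL dL1 pTheta pTheta1 intertwine).
Qed.
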